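(* In the continuous Donation Game, let $0\le\gamma\le b(K)-c(K)$, suppose $\lambda\ge c(K)/b(K)$, and let $p_0\in[0,1]$ satisfy $$\frac{\gamma-\lambda b(K)+c(K)}{(1-\lambda)b(K)}\le p_0\le\frac{\gamma}{(1-\lambda)b(K)}.$$ Define, for $x\in\{0,K\}$ and $y\in[0,K]$, $p(x,y)=\frac{1}{\lambda}\left(\frac{c(y)+\gamma}{b(K)}-(1-\lambda)p_0\right)$. Then $p(x,y)\in[0,1]$, and the memory-one strategy for $X$ with $\sigma_X^0=(1-p_0)\delta_0+p_0\delta_K$ and $\sigma_X[x,y]=(1-p(x,y))\delta_0+p(x,y)\delta_K$ enforces $\pi_Y=\gamma$ against every behavioral strategy of $Y$.
   Context: Continuous Donation Game: fix $K>0$ and measurable nondecreasing functions $b,c:[0,K]\to\mathbb{R}$ with $b(0)=c(0)=0$ and $b(s)>c(s)$ for $s>0$. Action spaces $S_X=S_Y=[0,K]$, payoffs $u_X(x,y)=b(y)-c(x)$, $u_Y(x,y)=b(x)-c(y)$, discount factor $\lambda\in(0,1)$. Repeated-game framework: histories $\mathcal{H}=\bigsqcup_T(S_X\times S_Y)^T$; a behavioral strategy is a Markov kernel from histories to the player's action space; a memory-one strategy for $X$ consists of an initial probability measure $\sigma_X^0$ and a Markov kernel $\sigma_X[x,y]$ applied to the previous action pair. The strategies generate, via $\mu_0=\sigma_X[\varnothing]\otimes\sigma_Y[\varnothing]$ and $\mu_t(E'\times E)=\int_{E'}(\sigma_X[h]\otimes\sigma_Y[h])(E)\,d\mu_{t-1}(h)$,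 the laws $\nu_t(E)=\mu_t(\mathcal{H}^t\times E)$ of the action pair at time $t$, and $\pi_X=(1-\lambda)\sum_t\lambda^t\int u_X\,d\nu_t$, $\pi_Y=(1-\lambda)\sum_t\lambda^t\int u_Y\,d\nu_t$. $\delta_s$ is the Dirac measure at $s$. *)

From HB Require Import structures.
From mathcomp Require Import all_boot all_order all_algebra.
From mathcomp Require Import all_classical all_reals all_analysis.
Set Implicit Arguments. Unset Strict Implicit. Unset Printing Implicit Defensive.
Import Order.TTheory GRing.Theory Num.Theory.
Local Open Scope classical_set_scope.
Local Open Scope ring_scope.

Record mtype := MType { mdisp : measure_display; mcar :> measurableType mdisp }.

Section Hist.
Variable R : realType.
Fixpoint hist (t : nat) : mtype :=
  match t with
  | 0 => @MType _ (R * R)%type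
  | t.+1 => @MType _ (mcar (hist t) * (R * R))%type
  end.

Definition lastp (t : nat) : hist t -> (R * R)%type :=
  match t with 0 => fun h => h | t.+1 => fun h => h.2 end.
End Hist.

(* Histories of length t+1 are elements of  hist R t, a nested product *)
(* ((..((R*R) * (R*R)) ..) * (R*R)) with the product (Borel) sigma-    *)
(* algebra; lastp h is the most recent action pair (x,y) of h.         *)

Section DonationGame.
Variable R : realType.
Local Open Scope ereal_scope.

Definition on0K (K : R) (f : R -> R) (x : R) : R :=
  if x \in `[0, K]%R then f x else 0%R.

Definition uY (K : R) (b c : R -> R) (xy : R * R) : R :=
  (on0K K b xy.1 - on0K K c xy.2)%R.

Record behY (K : R) := BehY {
  sY0 : probability R R ;
  sY : forall t : nat, R.-pker (mcar (hist R t)) ~> R ;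
  sY0_supp : sY0 `[0%R, K]%classic = 1 ;
  sY_supp : forall t (h : hist R t), sY t h `[0%R, K]%classic = 1 }.

(* mu : forall t, measure on histories of length t+1, is the law of play
   generated by X's memory-one strategy (sX0, sXm) and Y's strategy sy:
   mu_0 = sX0 (x) sY0 and
   mu_t (E' x E) = \int_{E'} (sigma_X[h] (x) sigma_Y[h])(E) d mu_{t-1}(h),
   stated on measurable rectangles E = A x B (which determines the product
   measure sigma_X[h] (x) sigma_Y[h]). *)
Definition play_law (K : R) (sX0 : set R -> \bar R)
    (sXm : R * R -> set R -> \bar R) (sy : behY K)
    (mu : forall t : nat, {measure set (mcar (hist R t)) -> \bar R}) : Prop :=
  (forall A B : set R, measurable A -> measurable B ->
     mu 0%N (A `*` B) = sX0 A * sY0 sy B) /\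
  (forall (t : nat) (E' : set (mcar (hist R t))) (A B : set R),
     measurable E' -> measurable A -> measurable B ->
     mu t.+1 (E' `*` (A `*` B)) =
       \int[mu t]_(h in E') (sXm (lastp h) A * sY sy t h B)).

Definition payoffY_is (K : R) (b c : R -> R) (lam : R)
    (mu : forall t : nat, {measure set (mcar (hist R t)) -> \bar R})
    (v : R) : Prop :=
  (fun n : nat => \sum_(0 <= t < n)
      (((1 - lam) * lam ^+ t)%R%:E *
       \int[mu t]_h (uY K b c (lastp h))%:E)) @ \oo --> v%:E.

Definition mix0K (K q : R) (A : set R) : \bar R :=
  (1 - q)%R%:E * @dirac _ R (0%R : R) R A + q%:E * @dirac _ R K R A.

Definition pZD (K : R) (b c : R -> R) (gam lam p0 : R) (x y : R) : R :=
  (lam^-1 * ((on0K K c y + gam) / b K - (1 - lam) * p0))%R.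

End DonationGame.

From HB Require Import structures.
From mathcomp Require Import all_boot all_order all_algebra.
From mathcomp Require Import all_classical all_reals all_analysis.
From mathcomp Require Import measurable_realfun ring lra.
Set Implicit Arguments. Unset Strict Implicit. Unset Printing Implicit Defensive.
Import Order.TTheory GRing.Theory Num.Theory numFieldNormedType.Exports.
Local Open Scope classical_set_scope.
Local Open Scope ring_scope.

(* The probability that X gives K in round t+1 is affine in c(y_t), so the
   probability q_{t+1} that x_{t+1} = K is affine in E c(y_t).  Solving for
   E c(y_t) and using E b(x_t) = b(K) q_t, the expected round-t payoff of Y is
   gam + b(K) (q_t - lam q_{t+1} - (1 - lam) q_0), whose discounted sum
   telescopes to gam + lam^n (bounded) and hence tends to gam. *)

Section unit_mass_integral.
Context (R : realType) d (T : measurableType d) (m : {measure set T -> \bar R}).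
Hypothesis m1 : m setT = 1%E.
Local Open Scope ereal_scope.

Lemma integrable_bounded (f : T -> R) (M : R) :
  measurable_fun setT f -> (forall x, `|f x| <= M)%R ->
  m.-integrable setT (EFin \o f).
Proof.
move=> mf fM; apply: measurable_bounded_integrable => //.
  by rewrite m1 ltry.
exists M; split; first by rewrite num_real.
by move=> N MN x _; apply: le_trans (fM x) (ltW MN).
Qed.

Lemma integral_bounded_fineK (f : T -> R) (M : R) :
  measurable_fun setT f -> (forall x, `|f x| <= M)%R ->
  \int[m]_x (f x)%:E = (fine (\int[m]_x (f x)%:E))%:E.
Proof.
by move=> mf fM; rewrite fineK // (integrable_fin_num _ (integrable_bounded mf fM)).
Qed.

Lemma integral_affine (f : T -> R) (M a k : R) :
  measurable_fun setT f -> (forall x, `|f x| <= M)%R ->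
  \int[m]_x (a + k * f x)%:E = (a + k * fine (\int[m]_x (f x)%:E))%:E.
Proof.
move=> mf fM; under eq_integral do rewrite EFinD EFinM.
rewrite integralD //; last 2 first.
- exact: (@integrable_bounded (fun=> a) `|a| (measurable_cst _)).
- exact/integrableZl/(integrable_bounded mf fM).
rewrite integral_cst // m1 mule1 integralZl ?(integrable_bounded mf fM) //.
by rewrite [X in (_ * X)%E](integral_bounded_fineK mf fM).
Qed.

Lemma fine_integral_ge0_le (f : T -> R) (M : R) :
  measurable_fun setT f -> (forall x, 0 <= f x <= M)%R ->
  (0 <= fine (\int[m]_x (f x)%:E) <= M)%R.
Proof.
move=> mf f0M; have fM x : (`|f x| <= M)%R.
  by have /andP[f0 ?] := f0M x; rewrite ger0_norm.
apply/andP; split; rewrite -lee_fin -(integral_bounded_fineK mf fM).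
  by apply: integral_ge0 => x _; rewrite lee_fin; case/andP: (f0M x).
have -> : M%:E = \int[m]_x M%:E by rewrite integral_cst // m1 mule1.
apply: le_integral => //; first exact: integrable_bounded mf fM.
- exact: (@integrable_bounded (fun=> M) `|M| (measurable_cst _)).
- by move=> x _; rewrite lee_fin; case/andP: (f0M x).
Qed.

End unit_mass_integral.

Section law_mix0K.
Context (R : realType) d (T : measurableType d) (m : {measure set T -> \bar R}).
Local Open Scope ereal_scope.

Lemma integral_law_mix0K (g : T -> R) (K q : R) (f : R -> R) :
  measurable_fun setT g -> (0 <= q <= 1)%R ->
  (forall A, measurable A -> m (g @^-1` A) = mix0K K q A) ->
  measurable_fun setT f -> (forall x, 0 <= f x)%R ->
  (\int[m]_x (f (g x))%:E = ((1 - q) * f 0 + q * f K)%:E)%E.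
Proof.
move=> mg /andP[q0 q1] lawg mf f0.
have q'0 : (0 <= 1 - q)%R by rewrite subr_ge0.
have mEf : measurable_fun [set: R] (fun x : R => (f x)%:E).
  exact/measurable_EFinP.
have f0E x : [set: R] x -> (0 <= (f x)%:E)%E by rewrite lee_fin.
transitivity (\int[pushforward m g]_y (f y)%:E).
  by rewrite (ge0_integral_pushforward mg) // ?preimage_setT // => y _; exact: f0E.
rewrite (eq_measure_integral (measure_add (mscale (NngNum q'0) \d_(0%R : R))
   (mscale (NngNum q0) \d_K))) => [|A mA _]; last first.
  transitivity (m (g @^-1` A)) => //; rewrite lawg //.
  exact/esym/(measure_addE (mscale (NngNum q'0) \d_(0%R : R))
    (mscale (NngNum q0) \d_K)).
rewrite ge0_integral_measure_add // !ge0_integral_mscale //.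
by rewrite !integral_dirac //= !diracT !mul1e -!EFinM -EFinD.
Qed.

End law_mix0K.

Lemma measurable_lastp (R : realType) t : measurable_fun setT (@lastp R t).
Proof. by case: t => [|t]; [exact: measurable_id | exact: measurable_snd]. Qed.

Lemma measurable_on0K (R : realType) (K : R) (f : R -> R) :
  measurable_fun `[0, K]%classic f -> measurable_fun setT (on0K K f).
Proof.
move=> mf; have -> : on0K K f = patch (fun=> 0) `[0, K]%classic f.
  apply/funext => x; rewrite /on0K /patch.
  by congr (if _ then _ else _); apply/idP/idP; rewrite inE.
exact/(measurable_restrictT f).
Qed.

Lemma on0K_ge0_le (R : realType) (K : R) (f : R -> R) :
  0 <= K -> f 0 = 0 -> {in `[0, K] &, {homo f : x y / x <= y}} ->
  forall x, 0 <= on0K K f x <= f K.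
Proof.
move=> K0 f0 fmono x; have K0K : K \in `[0, K] by rewrite in_itv /= lexx K0.
rewrite /on0K; case: ifPn => [xK|_].
  have := xK; rewrite in_itv /= => /andP[x0 xle].
  by rewrite -{1}f0 !fmono // in_itv /= lexx K0.
by rewrite lexx -f0 fmono // in_itv /= lexx K0.
Qed.

Lemma mix0K_setT (R : realType) (K q : R) : mix0K K q setT = 1%E.
Proof. by rewrite /mix0K !diracT !mule1 -EFinD subrK. Qed.

Section reactive_play.
Context (R : realType) (K p0 al be G : R) (g : R -> R) (sy : behY K)
  (mu : forall t : nat, {measure set (mcar (hist R t)) -> \bar R}).
Hypotheses (mg : measurable_fun setT g) (gG : forall y, `|g y| <= G)
  (p01 : forall y, 0 <= al + be * g y <= 1) (p001 : 0 <= p0 <= 1)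
  (hmu : play_law (mix0K K p0) (fun xy => mix0K K (al + be * g xy.2)) sy mu).

Definition mean_lastY t := fine (\int[mu t]_h (g (lastp h).2)%:E).

Definition prob_lastK t := if t is s.+1 then al + be * mean_lastY s else p0.

Lemma play_law_setT t : mu t setT = 1%E.
Proof.
have [mu0 muS] := hmu; elim: t => [|t IH].
  by rewrite -setXTT mu0 // mix0K_setT probability_setT mule1.
rewrite -[in LHS]setXTT -setXTT muS //.
under eq_integral do rewrite mix0K_setT prob_kernel mule1.
by rewrite integral_cst // IH mule1.
Qed.

Lemma measurable_g_lastY t : measurable_fun setT (fun h : hist R t => g (lastp h).2).
Proof. exact/(measurableT_comp mg)/measurableT_comp/measurable_lastp. Qed.

Lemma prob_lastK_ge0_le1 t : 0 <= prob_lastK t <= 1.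
Proof.
case: t => [//|t] /=; have mgt := measurable_g_lastY (t:=t).
have -> : al + be * mean_lastY t = fine (\int[mu t]_h (al + be * g (lastp h).2)%:E).
  by rewrite (integral_affine (play_law_setT t) al be mgt (fun h => gG _)).
apply: (fine_integral_ge0_le (play_law_setT t)) => [|h]; last exact: p01.
exact/measurable_funD/measurable_funM/mgt.
Qed.

Lemma play_law_lastX t A : measurable A ->
  mu t ((fun h => (lastp h).1) @^-1` A) = mix0K K (prob_lastK t) A.
Proof.
have [mu0 muS] := hmu; move=> mA; case: t => [|t] /=.
  have -> : (fun h : hist R 0 => (lastp h).1) @^-1` A = A `*` setT.
    by apply/seteqP; split => [[x y]|[x y]] //= [].
  by rewrite mu0 // probability_setT mule1.
have -> : (fun h : hist R t.+1 => (lastp h).1) @^-1` A = setT `*` (A `*` setT).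
  by apply/seteqP; split => [[h [x y]]|[h [x y]]] //= [_ []].
pose a0 : R := ((0 : R) \in A)%:R; pose aK : R := (K \in A)%:R.
have mixA q : mix0K K q A = (a0 + (aK - a0) * q)%:E.
  by rewrite /mix0K !diracE -!EFinM -EFinD /a0 /aK; congr EFin; ring.
rewrite muS // mixA; transitivity
  (\int[mu t]_h (a0 + (aK - a0) * al + (aK - a0) * be * g (lastp h).2)%:E)%E.
  by apply: eq_integral => h _; rewrite prob_kernel mule1 mixA; congr EFin; ring.
rewrite (integral_affine (play_law_setT t) _ _ (measurable_g_lastY (t:=t)) (fun h => gG _)).
by congr EFin; rewrite /mean_lastY; ring.
Qed.

Lemma integral_lastX_sub_lastY t (f : R -> R) (F : R) :
  measurable_fun setT f -> (forall x, 0 <= f x <= F) ->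
  (\int[mu t]_h (f (lastp h).1 - g (lastp h).2)%:E =
   ((1 - prob_lastK t) * f 0 + prob_lastK t * f K - mean_lastY t)%:E)%E.
Proof.
move=> mf f0F; have mfX : measurable_fun setT (fun h : hist R t => f (lastp h).1).
  exact/(measurableT_comp mf)/measurableT_comp/measurable_lastp.
have fXF (h : hist R t) : `|f (lastp h).1| <= F.
  by have /andP[f0 ?] := f0F (lastp h).1; rewrite ger0_norm.
under eq_integral do rewrite EFinB.
rewrite integralB_EFin //; last 2 first.
- exact (integrable_bounded (play_law_setT t) mfX fXF).
- exact (integrable_bounded (play_law_setT t) (measurable_g_lastY (t:=t)) (fun h => gG _)).
rewrite (integral_bounded_fineK (play_law_setT t) (measurable_g_lastY (t:=t)) (fun h => gG _)).
have mX : measurable_fun setT (fun h : hist R t => (lastp h).1).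
  exact/measurableT_comp/measurable_lastp.
rewrite (integral_law_mix0K mX (prob_lastK_ge0_le1 t) (play_law_lastX t) mf) -?EFinB //.
by move=> x; case/andP: (f0F x).
Qed.

End reactive_play.

Section discounted_telescope.
Context (R : realType) (lam gam B Q : R) (q : nat -> R).
Hypotheses (lam01 : 0 <= lam < 1) (qQ : forall n, `|q n| <= Q).

Lemma discounted_telescope_sum n :
  \sum_(0 <= t < n) (1 - lam) * lam ^+ t *
      (gam + B * (q t - lam * q t.+1 - (1 - lam) * q 0%N)) =
  gam + lam ^+ n * ((1 - lam) * B * (q 0%N - q n) - gam).
Proof.
elim: n => [|n IH]; first by rewrite big_geq // expr0; ring.
by rewrite big_nat_recr //= IH exprS; ring.
Qed.

Lemma discounted_telescope_cvg :
  (fun n : nat => \sum_(0 <= t < n) (1 - lam) * lam ^+ t *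
      (gam + B * (q t - lam * q t.+1 - (1 - lam) * q 0%N))) @ \oo --> gam.
Proof.
have [lam0 lam1] := andP lam01.
pose M := 2 * Q * `|B| + `|gam|.
have DM n : `|(1 - lam) * B * (q 0%N - q n) - gam| <= M.
  have qdiff : `|q 0%N - q n| <= 2 * Q.
    by rewrite (le_trans (ler_normB _ _)) // mulrDl !mul1r lerD.
  have lamB : `|(1 - lam) * B| <= `|B|.
    rewrite normrM ger0_norm; last by rewrite subr_ge0 ltW.
    by apply: ler_piMl => //; lra.
  rewrite (le_trans (ler_normB _ _)) // lerD2r normrM mulrC.
  exact: ler_pM.
have lamnM0 : (fun n => lam ^+ n * M) @ \oo --> 0.
  rewrite -(mul0r M); apply: cvgM; last exact: cvg_cst.
  by apply: cvg_expr; rewrite ger0_norm.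
under eq_fun do rewrite discounted_telescope_sum.
apply: (@squeeze_cvgr _ _ _ _ (fun n => gam - lam ^+ n * M)
  (fun n => gam + lam ^+ n * M)).
- apply: nearW => n /=; rewrite -mulrN !lerD2l.
  have lamn0 : 0 <= lam ^+ n by rewrite exprn_ge0.
  have := DM n; rewrite ler_norml => /andP[DMl DMr].
  by rewrite !ler_wpM2l.
- rewrite -[X in _ --> X]subr0; apply: cvgB; first exact: cvg_cst.
  exact: lamnM0.
- rewrite -[X in _ --> X]addr0; apply: cvgD; first exact: cvg_cst.
  exact: lamnM0.
Qed.

End discounted_telescope.

Section zero_determinant.
Context (R : realType) (K : R) (b c : R -> R) (lam gam p0 : R).
Hypotheses (hK : 0 < K)
  (hbm : measurable_fun `[0, K]%classic b)
  (hcm : measurable_fun `[0, K]%classic c)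
  (hbmono : {in `[0, K] &, {homo b : x y / x <= y}})
  (hcmono : {in `[0, K] &, {homo c : x y / x <= y}})
  (hb0 : b 0 = 0) (hc0 : c 0 = 0) (hlam : 0 < lam < 1) (bK0 : 0 < b K)
  (hp01 : 0 <= p0 <= 1)
  (hp0lo : (gam - lam * b K + c K) / ((1 - lam) * b K) <= p0)
  (hp0hi : p0 <= gam / ((1 - lam) * b K)).

Let al := lam^-1 * (gam / b K - (1 - lam) * p0).
Let be := lam^-1 / b K.

Lemma pZDE x y : pZD K b c gam lam p0 x y = al + be * on0K K c y.
Proof. by rewrite /pZD /al /be; ring. Qed.

Lemma pZD_ge0_le1 x y : 0 <= pZD K b c gam lam p0 x y <= 1.
Proof.
have [lam0 lam1] := andP hlam.
have /andP[u0 uK] := on0K_ge0_le (ltW hK) hc0 hcmono y.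
have lbK0 : 0 < (1 - lam) * b K by rewrite mulr_gt0 // subr_gt0.
move: hp0lo hp0hi; rewrite ler_pdivrMr // ler_pdivlMr // => p0lo p0hi.
rewrite /pZD mulrC; apply/andP; split.
  by apply: divr_ge0; [rewrite subr_ge0 ler_pdivlMr //; lra | exact: ltW].
by rewrite ler_pdivrMr // mul1r lerBlDr ler_pdivrMr //; lra.
Qed.

Variables (sy : behY K)
  (mu : forall t : nat, {measure set (mcar (hist R t)) -> \bar R}).
Hypothesis hmu : play_law (mix0K K p0)
  (fun xy => mix0K K (pZD K b c gam lam p0 xy.1 xy.2)) sy mu.

Let hmu_affine :
  play_law (mix0K K p0) (fun xy => mix0K K (al + be * on0K K c xy.2)) sy mu.
Proof.
suff -> : (fun xy : R * R => mix0K K (al + be * on0K K c xy.2)) =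
  (fun xy => mix0K K (pZD K b c gam lam p0 xy.1 xy.2)) by [].
by apply/funext => xy; rewrite pZDE.
Qed.

Let cY_norm y : `|on0K K c y| <= c K.
Proof.
by have /andP[? ?] := on0K_ge0_le (ltW hK) hc0 hcmono y; rewrite ger0_norm.
Qed.

Let affine_ge0_le1 y : 0 <= al + be * on0K K c y <= 1.
Proof. by rewrite -(pZDE 0); exact: pZD_ge0_le1. Qed.

Let q := prob_lastK p0 al be (on0K K c) mu.

Lemma integral_uY_pZD t : (\int[mu t]_h (uY K b c (lastp h))%:E)%E =
  (gam + b K * (q t - lam * q t.+1 - (1 - lam) * q 0%N))%:E.
Proof.
have [lam0 _] := andP hlam.
have inK : K \in `[0, K] by rewrite in_itv /= lexx ltW.
have in0 : 0 \in `[0, K] by rewrite in_itv /= lexx ltW.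
rewrite /uY (integral_lastX_sub_lastY (measurable_on0K hcm) cY_norm affine_ge0_le1
  hp01 hmu_affine t (measurable_on0K hbm) (on0K_ge0_le (ltW hK) hb0 hbmono)).
congr EFin; rewrite /q /= /al /be /on0K inK in0 hb0.
by field; rewrite ?lt0r_neq0.
Qed.

Lemma pZD_payoffY : payoffY_is K b c lam mu gam.
Proof.
have [lam0 lam1] := andP hlam; have lam01 : 0 <= lam < 1 by rewrite ltW.
have q_norm n : `|q n| <= 1.
  have /andP[? ?] := prob_lastK_ge0_le1 (measurable_on0K hcm) cY_norm
    affine_ge0_le1 hp01 hmu_affine n.
  by rewrite ger0_norm.
rewrite /payoffY_is; under eq_fun do under eq_bigr do
  rewrite integral_uY_pZD -EFinM.
under eq_fun do rewrite sumEFin.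
apply: cvg_EFin; first exact: nearW.
exact (discounted_telescope_cvg (b K) lam01 q_norm).
Qed.

End zero_determinant.

Theorem mainTheorem10 (R : realType) (K : R) (b c : R -> R) (lam gam p0 : R)
  (hK : 0 < K)
  (hbm : measurable_fun `[0, K]%classic b)
  (hcm : measurable_fun `[0, K]%classic c)
  (hbmono : {in `[0, K] &, {homo b : x y / x <= y}})
  (hcmono : {in `[0, K] &, {homo c : x y / x <= y}})
  (hb0 : b 0 = 0) (hc0 : c 0 = 0)
  (hbc : forall s, 0 < s <= K -> c s < b s)
  (hlam : 0 < lam < 1)
  (hgam : 0 <= gam <= b K - c K)
  (hlamK : c K / b K <= lam)
  (hp01 : 0 <= p0 <= 1)
  (hp0lo : (gam - lam * b K + c K) / ((1 - lam) * b K) <= p0)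
  (hp0hi : p0 <= gam / ((1 - lam) * b K)) :
  (forall x y : R, (x = 0 \/ x = K) -> 0 <= y <= K ->
     0 <= pZD K b c gam lam p0 x y <= 1) /\
  (forall (sy : behY K)
          (mu : forall t : nat, {measure set (mcar (hist R t)) -> \bar R}),
     play_law (mix0K K p0)
       (fun xy => mix0K K (pZD K b c gam lam p0 xy.1 xy.2)) sy mu ->
     payoffY_is K b c lam mu gam).
Proof.
(* hgam and hlamK only make the interval allowed for p0 nonempty. *)
have cK0 : 0 <= c K.
  by have /andP[/le_trans] := on0K_ge0_le (ltW hK) hc0 hcmono 0; apply.
have bK0 : 0 < b K by apply: le_lt_trans cK0 (hbc _ _); rewrite hK lexx.
split=> [x y _ _|sy mu hmu]; first exact: pZD_ge0_le1.
exact: pZD_payoffY hmu.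
Qed.
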